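(* Let $\alpha$ be irrational with $\ln2/\ln3<\alpha<1$ and write $1c_\alpha=s_0s_1s_2\cdots$. Then $$\limsup_{k\to\infty}\Phi_{\mathbb{R}}(s_ks_{k+1}\cdots)=\Phi_{\mathbb{R}}(1c_\alpha),\qquad \liminf_{k\to\infty}\Phi_{\mathbb{R}}(s_ks_{k+1}\cdots)=\Phi_{\mathbb{R}}(0c_\alpha)=3\Phi_{\mathbb{R}}(1c_\alpha)+1.$$
   Context: For $0<\alpha<1$, $1c_\alpha=(\lceil(j+1)\alpha\rceil-\lceil j\alpha\rceil)_{j\ge0}$ and $0c_\alpha=(\lfloor(j+1)\alpha\rfloor-\lfloor j\alpha\rfloor)_{j\ge0}$. For an infinite $0$-$1$ word $w$ with $1$'s at positions $d_0<d_1<\cdots$, $\Phi_{\mathbb{R}}(w)=-\sum_{i\ge0}2^{d_i}/3^{i+1}$ (a convergent real series in the situation considered). *)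

From Stdlib Require Import Reals ZArith.
From Coquelicot Require Import Coquelicot.
Open Scope R_scope.

Definition rfloor (x : R) : Z := (up x - 1)%Z.
Definition rceil (x : R) : Z := (- rfloor (- x))%Z.

(* infinite words over integers (the ones considered are 0-1 words) *)
Definition word := nat -> Z.

Definition oneC (alpha : R) : word :=
  fun j => (rceil (INR (S j) * alpha) - rceil (INR j * alpha))%Z.
Definition zeroC (alpha : R) : word :=
  fun j => (rfloor (INR (S j) * alpha) - rfloor (INR j * alpha))%Z.

Definition suffix (w : word) (k : nat) : word := fun j => w (k + j)%nat.

Fixpoint ones (w : word) (n : nat) : nat :=
  match n with
  | O => O
  | S m => (ones w m + (if Z.eqb (w m) 1%Z then 1 else 0))%nat
  end.

(* If w_j = 1 is the i-th one (i counted from 0, i.e. j = d_i), then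
   ones w (S j) = i+1, so this term is 2^{d_i}/3^{i+1}; all other terms vanish. *)
Definition Phi_term (w : word) (j : nat) : R :=
  if Z.eqb (w j) 1%Z then 2 ^ j / 3 ^ (ones w (S j)) else 0.

Definition PhiR (w : word) : R := - Series (Phi_term w).

Definition irrational (x : R) : Prop :=
  ~ exists (p q : Z), q <> 0%Z /\ x = IZR p / IZR q.

(* For an offset u in [0,1] let G(u) = sum_m 2^(floor((m+u)/alpha)) / 3^(m+1).
   The m-th one of a mechanical word of slope alpha sits at position
   floor((m+u)/alpha) for a suitable u, so Phi_R of such a word is -G(u):
   the suffix of 1c_alpha starting at k has offset
   U_k = ceil(k alpha) - k alpha in [0,1), and 0c_alpha has offset 1.
   The proof therefore splits into three parts:
   - a reindexing lemma: if a 0-1 word is the difference sequence of a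
     counting function c, its Phi series sums to sum_m 2^(p m)/3^(m+1),
     where p m is the position of the m-th one;
   - analysis of G: its terms are dominated by (2/3^alpha)^m (this is
     where ln 2/ln 3 < alpha is used), G is nondecreasing, continuous from
     the right at 0 and (alpha irrational) from the left at 1, and
     G(1) = 3 G(0) - 1;
   - equidistribution-type facts: since alpha is irrational, U_k comes
     arbitrarily close to 0 and to 1 for arbitrarily large k (pigeonhole).
   Since 0 = U_0 <= U_k < 1, the lim sup of Phi_R(suffixes) = -G(U_k) is
   -G(0) = Phi_R(1c_alpha) and the lim inf is -G(1) = Phi_R(0c_alpha). *)

From Stdlib Require Import Reals ZArith Lia Lra List FinFun.
From Coquelicot Require Import Coquelicot.
Open Scope R_scope.

Lemma IZR_lt_succ_le (a b : Z) : IZR a < IZR b + 1 -> (a <= b)%Z.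
Proof. intros H. rewrite <- plus_IZR in H. apply lt_IZR in H. lia. Qed.

Lemma rfloor_spec x : IZR (rfloor x) <= x < IZR (rfloor x) + 1.
Proof.
  unfold rfloor. destruct (archimed x) as [H1 H2].
  rewrite minus_IZR. split; lra.
Qed.

Lemma rfloor_uniq x z : IZR z <= x < IZR z + 1 -> rfloor x = z.
Proof.
  intros [H1 H2]. unfold rfloor.
  assert (z + 1 = up x)%Z by (apply tech_up; rewrite plus_IZR; lra).
  lia.
Qed.

Lemma rceil_spec x : IZR (rceil x) - 1 < x <= IZR (rceil x).
Proof.
  unfold rceil. destruct (rfloor_spec (- x)) as [H1 H2].
  rewrite opp_IZR. split; lra.
Qed.

Lemma rceil_uniq x z : IZR z - 1 < x <= IZR z -> rceil x = z.
Proof.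
  intros [H1 H2]. unfold rceil.
  rewrite (rfloor_uniq (- x) (- z)); [lia|]. rewrite opp_IZR; lra.
Qed.

Lemma rfloor_le x y : x <= y -> (rfloor x <= rfloor y)%Z.
Proof.
  intros H. destruct (rfloor_spec x), (rfloor_spec y).
  apply IZR_lt_succ_le. lra.
Qed.

Lemma rfloor_nonneg x : 0 <= x -> (0 <= rfloor x)%Z.
Proof. intros H. destruct (rfloor_spec x). apply IZR_lt_succ_le. lra. Qed.

Lemma rfloor_add_small x a : 0 < a < 1 ->
  rfloor (x + a) = rfloor x \/ rfloor (x + a) = (rfloor x + 1)%Z.
Proof.
  intros Ha. destruct (rfloor_spec x), (rfloor_spec (x + a)).
  assert (rfloor x <= rfloor (x + a))%Z by (apply IZR_lt_succ_le; lra).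
  assert (rfloor (x + a) <= rfloor x + 1)%Z
    by (apply IZR_lt_succ_le; rewrite plus_IZR; lra).
  lia.
Qed.

Lemma rceil_add_small x a : 0 < a < 1 ->
  rceil (x + a) = rceil x \/ rceil (x + a) = (rceil x + 1)%Z.
Proof.
  intros Ha. destruct (rceil_spec x), (rceil_spec (x + a)).
  assert (rceil x <= rceil (x + a))%Z by (apply IZR_lt_succ_le; lra).
  assert (rceil (x + a) <= rceil x + 1)%Z
    by (apply IZR_lt_succ_le; rewrite plus_IZR; lra).
  lia.
Qed.

Lemma rceil_add_ge x y : (rceil x + rfloor y <= rceil (x + y))%Z.
Proof.
  destruct (rceil_spec x), (rfloor_spec y), (rceil_spec (x + y)).
  apply IZR_lt_succ_le. rewrite plus_IZR. lra.
Qed.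

Lemma rfloor_mult_unbounded a (M : nat) : 0 < a ->
  exists N : nat, (Z.of_nat M <= rfloor (INR N * a))%Z.
Proof.
  intros Ha. destruct (archimed ((INR M + 1) / a)) as [Hup _].
  assert (Hpos : 0 < (INR M + 1) / a)
    by (apply Rdiv_lt_0_compat; pose proof (pos_INR M); lra).
  exists (Z.to_nat (up ((INR M + 1) / a))).
  rewrite INR_IZR_INZ, Z2Nat.id by (apply le_IZR; lra).
  apply Rlt_div_l in Hup; [|lra].
  destruct (rfloor_spec (IZR (up ((INR M + 1) / a)) * a)).
  apply IZR_lt_succ_le. rewrite <- INR_IZR_INZ. lra.
Qed.

Lemma irrational_no_relation alpha (p q : Z) :
  irrational alpha -> q <> 0%Z -> IZR q * alpha <> IZR p.
Proof.
  intros Hirr Hq E. apply Hirr. exists p, q. split; [exact Hq|].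
  rewrite <- E. field. now apply not_0_IZR.
Qed.

Lemma pigeonhole n (f : nat -> nat) : (forall k, (k <= n)%nat -> (f k < n)%nat) ->
  exists i j, (i < j <= n)%nat /\ f i = f j.
Proof.
  intros Hf. apply Classical_Prop.NNPP. intros Hno.
  assert (Hnd : NoDup (map f (seq 0 (S n)))).
  { apply Injective_map_NoDup_in; [|apply seq_NoDup].
    intros i j Hi Hj E. apply in_seq in Hi, Hj.
    destruct (Nat.lt_total i j) as [H|[H|H]]; [| exact H |]; exfalso; apply Hno.
    - exists i, j. split; [lia|exact E].
    - exists j, i. split; [lia|symmetry; exact E]. }
  apply NoDup_incl_length with (l' := seq 0 n) in Hnd.
  - rewrite length_map, !length_seq in Hnd. lia.
  - intros y Hy. apply in_map_iff in Hy as [k [<- Hk]].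
    apply in_seq in Hk. apply in_seq. specialize (Hf k). lia.
Qed.

Fixpoint prefix_min (f : nat -> R) (N : nat) : R :=
  match N with O => 1 | S n => Rmin (prefix_min f n) (f n) end.

Lemma prefix_min_pos f N : (forall k, (k < N)%nat -> 0 < f k) -> 0 < prefix_min f N.
Proof.
  induction N as [|N IH]; intros H; simpl; [lra|].
  apply Rmin_glb_lt; [apply IH; intros; apply H|apply H]; lia.
Qed.

Lemma prefix_min_le f N k : (k < N)%nat -> prefix_min f N <= f k.
Proof.
  induction N as [|N IH]; intros H; simpl; [lia|].
  destruct (Nat.eq_dec k N) as [->|Hne]; [apply Rmin_r|].
  eapply Rle_trans; [apply Rmin_l|]. apply IH. lia.
Qed.

Lemma prefix_min_le_1 f N : prefix_min f N <= 1.
Proof.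
  induction N as [|N IH]; simpl; [lra|]. eapply Rle_trans; [apply Rmin_l|exact IH].
Qed.

Lemma Series_zero_prefix (a : nat -> R) (M : nat) : ex_series a ->
  (forall n, (n < M)%nat -> a n = 0) -> Series a = Series (fun k => a (M + k)%nat).
Proof.
  revert a. induction M as [|M IH]; intros a Hex Hz; [reflexivity|].
  rewrite Series_incr_1 by exact Hex. rewrite Hz by lia. rewrite Rplus_0_l.
  apply (IH (fun k => a (S k))); [exact (proj1 (ex_series_incr_1 a) Hex)|].
  intros n Hn. apply Hz. lia.
Qed.

Lemma geom_tail_small q eps : 0 <= q < 1 -> 0 < eps ->
  exists M : nat, q ^ M / (1 - q) < eps.
Proof.
  intros Hq He.
  destruct (pow_lt_1_zero q ltac:(rewrite Rabs_pos_eq; lra) (eps * (1 - q)))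
    as [M HM]; [apply Rmult_lt_0_compat; lra|].
  exists M. specialize (HM M (le_n M)).
  rewrite Rabs_pos_eq in HM by (apply pow_le; lra).
  apply Rlt_div_l; lra.
Qed.

Fixpoint partial_sum (f : nat -> R) (n : nat) : R :=
  match n with O => 0 | S m => partial_sum f m + f m end.

Lemma sum_n_partial_sum f n : sum_n f n = partial_sum f (S n).
Proof.
  induction n as [|n IH].
  - rewrite sum_O. simpl. now rewrite Rplus_0_l.
  - rewrite sum_Sn, IH. reflexivity.
Qed.

Lemma is_series_partial_sum (f : nat -> R) (l : R) :
  is_lim_seq (partial_sum f) l -> is_series f l.
Proof.
  intros H. apply is_lim_seq_incr_1 in H.
  apply (is_lim_seq_ext _ (sum_n f)) in H; [exact H|].
  intros n. symmetry. apply sum_n_partial_sum.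
Qed.

(* The word w is the difference sequence of a
   counting function c (c j = number of ones among w_0 ... w_(j-1)) which
   tends to infinity, and p m is the position of the m-th one (counted from
   0). *)
Section Reindex.
Variables (w : word) (c : nat -> Z) (p : nat -> nat).
Hypothesis w_diff : forall j, w j = (c (S j) - c j)%Z.
Hypothesis c_0 : c O = 0%Z.
Hypothesis c_step : forall j, c (S j) = c j \/ c (S j) = (c j + 1)%Z.
Hypothesis p_jump : forall j, c (S j) = (c j + 1)%Z -> p (Z.to_nat (c j)) = j.
Hypothesis c_unbounded : forall M : nat, exists N, (Z.of_nat M <= c N)%Z.

Definition position_term (m : nat) : R := 2 ^ p m / 3 ^ (S m).

Lemma count_nonneg j : (0 <= c j)%Z.
Proof. induction j as [|j IH]; [lia|]. destruct (c_step j); lia. Qed.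

Lemma count_mono i j : (i <= j)%nat -> (c i <= c j)%Z.
Proof. induction 1 as [|j _ IH]; [lia|]. destruct (c_step j); lia. Qed.

Lemma ones_count n : ones w n = Z.to_nat (c n).
Proof.
  induction n as [|n IH]; simpl; [now rewrite c_0|].
  rewrite IH, w_diff. pose proof (count_nonneg n).
  destruct (c_step n) as [E|E]; rewrite E.
  - rewrite Z.sub_diag. simpl. lia.
  - replace (c n + 1 - c n)%Z with 1%Z by lia. simpl. lia.
Qed.

Lemma partial_sum_reindex N :
  partial_sum (Phi_term w) N = partial_sum position_term (Z.to_nat (c N)).
Proof.
  induction N as [|N IH]; simpl; [now rewrite c_0|].
  rewrite IH. unfold Phi_term. rewrite w_diff. pose proof (count_nonneg N).
  destruct (c_step N) as [E|E]; rewrite E.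
  - rewrite Z.sub_diag. simpl. ring.
  - replace (c N + 1 - c N)%Z with 1%Z by lia. simpl.
    replace (Z.to_nat (c N + 1)) with (S (Z.to_nat (c N))) by lia.
    simpl. unfold position_term. rewrite p_jump by exact E.
    change (ones w N + (if (w N =? 1)%Z then 1%nat else 0%nat))%nat
      with (ones w (S N)).
    rewrite ones_count, E. do 3 f_equal. lia.
Qed.

(* The Phi partial sums are a subsequence of the reindexed partial sums. *)
Lemma is_series_reindex :
  ex_series position_term -> is_series (Phi_term w) (Series position_term).
Proof.
  intros Hex. apply is_series_partial_sum.
  assert (L : is_lim_seq (partial_sum position_term) (Series position_term)).
  { apply is_lim_seq_incr_1, (is_lim_seq_ext (sum_n position_term));
      [intros; apply sum_n_partial_sum | exact (Series_correct _ Hex)]. }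
  apply (is_lim_seq_ext (fun N => partial_sum position_term (Z.to_nat (c N))));
    [intros; symmetry; apply partial_sum_reindex|].
  apply is_lim_seq_subseq; [|exact L].
  intros P [M HM]. destruct (c_unbounded M) as [N HN]. exists N.
  intros n Hn. apply HM. pose proof (count_mono N n Hn). lia.
Qed.

End Reindex.

Section Mechanical.
Variable alpha : R.
Hypothesis alpha_pos : 0 < alpha.
Hypothesis alpha_lt_1 : alpha < 1.
Hypothesis alpha_large : ln 2 < alpha * ln 3.
Hypothesis alpha_irr : irrational alpha.

(* Position of the m-th one (from 0) of the mechanical word of slope alpha
   with offset u in [0,1]. *)
Definition one_position (u : R) (m : nat) : nat :=
  Z.to_nat (rfloor ((INR m + u) / alpha)).

Definition profile_term (u : R) (m : nat) : R := 2 ^ one_position u m / 3 ^ (S m).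

Definition profile (u : R) : R := Series (profile_term u).

Definition ratio : R := 2 / Rpower 3 alpha.

Lemma ratio_range : 0 < ratio < 1.
Proof.
  assert (H : 2 < Rpower 3 alpha).
  { unfold Rpower. rewrite <- (exp_ln 2) by lra. apply exp_increasing. lra. }
  unfold ratio. split; [apply Rdiv_lt_0_compat; lra|]. apply Rlt_div_l; lra.
Qed.

Lemma one_position_spec u m : 0 <= u <= 1 ->
  (m <= one_position u m)%nat /\ INR (one_position u m) * alpha <= INR m + u.
Proof.
  intros Hu. unfold one_position.
  destruct (rfloor_spec ((INR m + u) / alpha)) as [F1 F2].
  set (z := rfloor ((INR m + u) / alpha)) in *.
  assert (Hm : INR m <= (INR m + u) / alpha).
  { apply Rle_div_r; [lra|]. pose proof (pos_INR m). nra. }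
  assert (Hz : (Z.of_nat m <= z)%Z)
    by (apply IZR_lt_succ_le; rewrite <- INR_IZR_INZ; lra).
  split; [lia|].
  rewrite INR_IZR_INZ, Z2Nat.id by lia. apply Rle_div_r in F1; lra.
Qed.

Lemma profile_term_bound u m : 0 <= u <= 1 -> 0 <= profile_term u m <= ratio ^ m.
Proof.
  intros Hu. destruct (one_position_spec u m Hu) as [P1 P2].
  pose proof ratio_range as Hr. unfold profile_term. set (P := one_position u m) in *.
  split; [apply Rdiv_le_0_compat; [apply pow_le|apply pow_lt]; lra|].
  apply Rle_trans with (ratio ^ P).
  - (* 3^(m+1) >= 3^(alpha P) since alpha P <= m + 1 *)
    unfold ratio, Rdiv. rewrite Rpow_mult_distr, pow_inv.
    apply Rmult_le_compat_l; [apply pow_le; lra|].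
    apply Rinv_le_contravar; [apply pow_lt, exp_pos|].
    assert (H3 : 0 < Rpower 3 alpha) by apply exp_pos.
    rewrite <- !Rpower_pow, Rpower_mult by lra.
    apply Rle_Rpower; [lra|]. rewrite S_INR. lra.
  - replace P with (m + (P - m))%nat by lia. rewrite pow_add.
    rewrite <- (Rmult_1_r (ratio ^ m)) at 2.
    apply Rmult_le_compat_l; [apply pow_le; lra|].
    rewrite <- (pow1 (P - m)). apply pow_incr. lra.
Qed.

Lemma ex_series_ratio : ex_series (fun n => ratio ^ n).
Proof. apply ex_series_geom. pose proof ratio_range. rewrite Rabs_pos_eq; lra. Qed.

Lemma ex_series_ratio_bounded (a : nat -> R) :
  (forall n, 0 <= a n <= ratio ^ n) -> ex_series a.
Proof.
  intros Ha. apply (@ex_series_le R_AbsRing R_CompleteNormedModule a (fun n => ratio ^ n));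
    [|exact ex_series_ratio].
  intros n. unfold norm; simpl. rewrite Rabs_pos_eq; apply Ha.
Qed.

Lemma ex_series_profile_term u : 0 <= u <= 1 -> ex_series (profile_term u).
Proof. intros Hu. apply ex_series_ratio_bounded. intros n. now apply profile_term_bound. Qed.

(* Positions floor((m+u)/alpha) grow with u, hence so do the terms of G and G. *)
Lemma profile_term_mono u v m : 0 <= u -> u <= v -> profile_term u m <= profile_term v m.
Proof.
  intros Hu Huv. unfold profile_term, one_position.
  apply Rmult_le_compat_r; [left; apply Rinv_0_lt_compat, pow_lt; lra|].
  apply Rle_pow; [lra|].
  enough (rfloor ((INR m + u) / alpha) <= rfloor ((INR m + v) / alpha))%Z by lia.
  apply rfloor_le. apply Rmult_le_compat_r; [left; apply Rinv_0_lt_compat|]; lra.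
Qed.

Lemma profile_mono u v : 0 <= u -> u <= v -> v <= 1 -> profile u <= profile v.
Proof.
  intros Hu Huv Hv. apply Series_le; [|apply ex_series_profile_term; lra].
  intros n. split; [apply (profile_term_bound u n); lra|]. now apply profile_term_mono.
Qed.

Lemma profile_close u v M : 0 <= u -> u <= v -> v <= 1 ->
  (forall m, (m < M)%nat -> profile_term u m = profile_term v m) ->
  profile v - profile u <= ratio ^ M / (1 - ratio).
Proof.
  intros Hu Huv Hv Hagree. pose proof ratio_range as Hr.
  set (d := fun n => profile_term v n - profile_term u n).
  assert (Hd : forall n, 0 <= d n <= ratio ^ n).
  { intros n. unfold d. pose proof (profile_term_mono u v n Hu Huv).
    destruct (profile_term_bound u n), (profile_term_bound v n); lra. }
  unfold profile. rewrite <- Series_minus by (apply ex_series_profile_term; lra).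
  change (Series d <= ratio ^ M / (1 - ratio)).
  rewrite (Series_zero_prefix d M);
    [| apply ex_series_ratio_bounded, Hd
     | intros n Hn; unfold d; rewrite Hagree by exact Hn; ring].
  replace (ratio ^ M / (1 - ratio)) with (Series (fun k => ratio ^ M * ratio ^ k))
    by (rewrite Series_scal_l, Series_geom by (rewrite Rabs_pos_eq; lra); reflexivity).
  apply Series_le; [intros k; rewrite <- pow_add; apply Hd|].
  apply (ex_series_scal_l (ratio ^ M) (fun k => ratio ^ k)), ex_series_ratio.
Qed.

(* G is continuous from the right at 0: for small u the first M positions
   floor((m+u)/alpha) coincide with floor(m/alpha). *)
Lemma profile_right_continuous_0 eps : 0 < eps ->
  exists del, 0 < del /\ forall u, 0 <= u < del -> profile u < profile 0 + eps.
Proof.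
  intros He. pose proof ratio_range as Hr.
  destruct (geom_tail_small ratio eps) as [M HM]; [lra|exact He|].
  set (gap := fun m => (IZR (rfloor (INR m / alpha)) + 1) * alpha - INR m).
  exists (prefix_min gap M). split.
  - apply prefix_min_pos. intros k _. unfold gap.
    destruct (rfloor_spec (INR k / alpha)) as [_ F]. apply Rlt_div_l in F; lra.
  - intros u Hu. pose proof (prefix_min_le_1 gap M).
    pose proof (prefix_min_le gap M) as Hgap. set (del := prefix_min gap M) in *.
    enough (profile u - profile 0 <= ratio ^ M / (1 - ratio)) by lra.
    apply profile_close; [lra|lra|lra|].
    intros m Hm. unfold profile_term, one_position. rewrite Rplus_0_r.
    replace (rfloor ((INR m + u) / alpha)) with (rfloor (INR m / alpha)); [reflexivity|].
    symmetry. apply rfloor_uniq.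
    specialize (Hgap m Hm). unfold gap in Hgap; cbv beta in Hgap.
    destruct (rfloor_spec (INR m / alpha)) as [F1 F2]. split.
    + apply Rle_trans with (INR m / alpha); [exact F1|].
      unfold Rdiv. apply Rmult_le_compat_r; [left; apply Rinv_0_lt_compat|]; lra.
    + apply Rlt_div_l; lra.
Qed.

(* G is continuous from the left at 1; this needs alpha irrational, so that
   (m+1)/alpha is never an integer. *)
Lemma profile_left_continuous_1 eps : 0 < eps ->
  exists del, 0 < del /\ forall u, 1 - del < u <= 1 -> profile 1 - eps < profile u.
Proof.
  intros He. pose proof ratio_range as Hr.
  destruct (geom_tail_small ratio eps) as [M HM]; [lra|exact He|].
  set (gap := fun m => INR m + 1 - IZR (rfloor ((INR m + 1) / alpha)) * alpha).
  assert (Hgap : forall m, 0 < gap m).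
  { intros m. unfold gap; cbv beta. set (z := rfloor ((INR m + 1) / alpha)).
    destruct (rfloor_spec ((INR m + 1) / alpha)) as [F1 _]. fold z in F1.
    apply Rle_div_r in F1; [|lra].
    destruct (Z.eq_dec z 0) as [Hz|Hz]; [rewrite Hz; pose proof (pos_INR m); simpl; lra|].
    pose proof (irrational_no_relation alpha (Z.of_nat m + 1) z alpha_irr Hz) as Hne.
    rewrite plus_IZR, <- INR_IZR_INZ in Hne.
    destruct (Rle_lt_or_eq_dec _ _ F1); [lra|contradiction]. }
  exists (prefix_min gap M). split; [apply prefix_min_pos; intros; apply Hgap|].
  intros u Hu. pose proof (prefix_min_le_1 gap M).
  pose proof (prefix_min_le gap M) as Hm'. set (del := prefix_min gap M) in *.
  enough (profile 1 - profile u <= ratio ^ M / (1 - ratio)) by lra.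
  apply profile_close; [lra|lra|lra|].
  intros m Hm. unfold profile_term, one_position.
  replace (rfloor ((INR m + u) / alpha)) with (rfloor ((INR m + 1) / alpha));
    [reflexivity|].
  symmetry. apply rfloor_uniq.
  specialize (Hm' m Hm). unfold gap in Hm'; cbv beta in Hm'.
  destruct (rfloor_spec ((INR m + 1) / alpha)) as [F1 F2]. split.
  + apply Rle_div_r; lra.
  + apply Rle_lt_trans with ((INR m + 1) / alpha); [|exact F2].
    unfold Rdiv. apply Rmult_le_compat_r; [left; apply Rinv_0_lt_compat|]; lra.
Qed.

(* Shifting the offset by 1 drops the first one: G(1) = 3 G(0) - 1. *)
Lemma profile_shift : profile 1 = 3 * profile 0 - 1.
Proof.
  unfold profile. rewrite (Series_incr_1 (profile_term 0)) by (apply ex_series_profile_term; lra).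
  assert (E : forall m, profile_term 1 m = 3 * profile_term 0 (S m)).
  { intros m. unfold profile_term, one_position.
    rewrite S_INR, Rplus_0_r. simpl. field. apply pow_nonzero. lra. }
  rewrite (Series_ext _ _ E), Series_scal_l.
  assert (E0 : profile_term 0 0 = / 3).
  { unfold profile_term, one_position. simpl. rewrite Rplus_0_r, Rdiv_0_l.
    rewrite (rfloor_uniq 0 0) by (simpl; lra). simpl. field. }
  rewrite E0. field.
Qed.

(* U_k = ceil(k alpha) - k alpha, the offset of the suffix of 1c_alpha at k. *)
Definition offset (k : nat) : R := IZR (rceil (INR k * alpha)) - INR k * alpha.

Lemma offset_range k : 0 <= offset k < 1.
Proof. unfold offset. destruct (rceil_spec (INR k * alpha)). lra. Qed.

Lemma offset_0 : offset 0 = 0.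
Proof.
  unfold offset. simpl. rewrite Rmult_0_l, (rceil_uniq 0 0) by (simpl; lra). ring.
Qed.

Lemma offset_pos k : k <> 0%nat -> 0 < offset k.
Proof.
  intros Hk. destruct (offset_range k) as [H0 _].
  destruct (Rle_lt_or_eq_dec _ _ H0) as [Hlt|Heq]; [exact Hlt|exfalso].
  apply (irrational_no_relation alpha (rceil (INR k * alpha)) (Z.of_nat k) alpha_irr);
    [lia|]. rewrite <- INR_IZR_INZ. unfold offset in Heq. lra.
Qed.

Lemma offset_eq k z : 0 <= IZR z - INR k * alpha < 1 -> offset k = IZR z - INR k * alpha.
Proof. intros H. unfold offset. rewrite (rceil_uniq _ z) by lra. reflexivity. Qed.

Lemma offset_sub i j : (i <= j)%nat ->
  offset (j - i) = offset j - offset i \/ offset (j - i) = offset j - offset i + 1.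
Proof.
  intros Hij. set (z := (rceil (INR j * alpha) - rceil (INR i * alpha))%Z).
  pose proof (offset_range i). pose proof (offset_range j).
  assert (Ez : IZR z - INR (j - i) * alpha = offset j - offset i).
  { unfold z, offset. rewrite minus_IZR, minus_INR by exact Hij. ring. }
  destruct (Rle_or_lt 0 (offset j - offset i)).
  - left. rewrite (offset_eq _ z); lra.
  - right. rewrite (offset_eq _ (z + 1)); rewrite plus_IZR; lra.
Qed.

Lemma offset_mul j d : INR j * offset d < 1 -> offset (j * d) = INR j * offset d.
Proof.
  intros H. pose proof (offset_range d). pose proof (pos_INR j).
  rewrite (offset_eq _ (Z.of_nat j * rceil (INR d * alpha)));
    unfold offset in *; rewrite mult_IZR, <- INR_IZR_INZ, mult_INR; [ring|split; nra].
Qed.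

Lemma offset_mul_compl j d : 0 < INR j * (1 - offset d) <= 1 ->
  offset (j * d) = 1 - INR j * (1 - offset d).
Proof.
  intros H. pose proof (offset_range d).
  rewrite (offset_eq _ (Z.of_nat j * rceil (INR d * alpha) - Z.of_nat j + 1));
    unfold offset in *;
    rewrite plus_IZR, minus_IZR, mult_IZR, <- INR_IZR_INZ, mult_INR; [ring|split; nra].
Qed.

(* Dirichlet's argument: among U_0, ..., U_n two lie in the same interval
   [i/n, (i+1)/n), so some U_d (d > 0) is within 1/n of 0 or of 1. *)
Lemma offset_near_edge del : 0 < del ->
  exists d, 0 < offset d /\ (offset d < del \/ 1 - del < offset d).
Proof.
  intros Hd. destruct (archimed_cor1 del Hd) as [n [Hn Hn0]].
  assert (Hn0' : 0 < INR n) by (apply lt_0_INR; exact Hn0).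
  set (box := fun k => rfloor (INR n * offset k)).
  assert (Hbox : forall k, (0 <= box k)%Z /\ (box k < Z.of_nat n)%Z).
  { intros k. pose proof (offset_range k). unfold box.
    split; [apply rfloor_nonneg; nra|].
    destruct (rfloor_spec (INR n * offset k)).
    apply lt_IZR. rewrite <- INR_IZR_INZ. nra. }
  destruct (pigeonhole n (fun k => Z.to_nat (box k))) as [i [j [Hij E]]].
  { intros k _. specialize (Hbox k). lia. }
  assert (Hsame : box i = box j) by (pose proof (Hbox i); pose proof (Hbox j); lia).
  assert (Hclose : Rabs (offset j - offset i) < / INR n).
  { unfold box in Hsame.
    destruct (rfloor_spec (INR n * offset i)), (rfloor_spec (INR n * offset j)).
    rewrite Hsame in *.
    assert (Hmul : Rabs (INR n * (offset j - offset i)) < 1) by (apply Rabs_def1; nra).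
    rewrite Rabs_mult, Rabs_pos_eq in Hmul by lra.
    apply (Rmult_lt_reg_l (INR n)); [lra|]. rewrite Rinv_r; lra. }
  exists (j - i)%nat. apply Rabs_def2 in Hclose.
  pose proof (offset_pos (j - i) ltac:(lia)).
  destruct (offset_sub i j ltac:(lia)) as [E1|E1]; rewrite E1 in *;
    split; [lra|left; lra|lra|right; lra].
Qed.

Lemma multiple_near_1 eta : 0 < eta < 1 -> exists j : nat, 1 - eta <= INR j * eta < 1.
Proof.
  intros He. destruct (rceil_spec (/ eta)) as [C1 C2].
  set (J := rceil (/ eta)) in *.
  assert (Hi : 1 < / eta) by (rewrite <- Rinv_1; apply Rinv_lt_contravar; lra).
  assert (HJ : (1 < J)%Z) by (apply lt_IZR; lra).
  exists (Z.to_nat (J - 1)). rewrite INR_IZR_INZ, Z2Nat.id, minus_IZR by lia.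
  assert (eta * / eta = 1) by (field; lra).
  split; nra.
Qed.

Lemma offset_small del : 0 < del -> exists k, 0 < offset k < del.
Proof.
  intros Hd. destruct (offset_near_edge del Hd) as [d [Hpos [Hsmall|Hlarge]]];
    [exists d; split; assumption|].
  pose proof (offset_range d).
  destruct (multiple_near_1 (1 - offset d)) as [j Hj]; [lra|].
  exists (j * d)%nat. rewrite offset_mul_compl by nra. lra.
Qed.

Lemma offset_large del : 0 < del -> exists k, 1 - del < offset k.
Proof.
  intros Hd. destruct (offset_near_edge del Hd) as [d [Hpos [Hsmall|Hlarge]]];
    [|exists d; exact Hlarge].
  pose proof (offset_range d).
  destruct (multiple_near_1 (offset d)) as [j Hj]; [lra|].
  exists (j * d)%nat. rewrite offset_mul by lra. lra.
Qed.

(* ... and does so for arbitrarily large k: it suffices to go below the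
   finitely many values U_1, ..., U_N, resp. above U_0, ..., U_(N-1). *)
Lemma offset_small_late del N : 0 < del -> exists k, (N <= k)%nat /\ offset k < del.
Proof.
  intros Hd. set (f := fun k => offset (S k)).
  assert (Hf : 0 < prefix_min f N) by (apply prefix_min_pos; intros k _; apply offset_pos; lia).
  destruct (offset_small (Rmin del (prefix_min f N))) as [k [Hk0 Hk]];
    [apply Rmin_glb_lt; lra|].
  pose proof (Rmin_l del (prefix_min f N)). pose proof (Rmin_r del (prefix_min f N)).
  exists k. split; [|lra].
  destruct k as [|k]; [rewrite offset_0 in Hk0; lra|].
  destruct (Nat.lt_ge_cases k N) as [Hl|Hl]; [|lia].
  pose proof (prefix_min_le f N k Hl). unfold f in *. lra.
Qed.

Lemma offset_large_late del N : 0 < del -> exists k, (N <= k)%nat /\ 1 - del < offset k.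
Proof.
  intros Hd. set (f := fun k => 1 - offset k).
  assert (Hf : 0 < prefix_min f N).
  { apply prefix_min_pos. intros k _. unfold f. pose proof (offset_range k). lra. }
  destruct (offset_large (Rmin del (prefix_min f N))) as [k Hk];
    [apply Rmin_glb_lt; lra|].
  pose proof (Rmin_l del (prefix_min f N)). pose proof (Rmin_r del (prefix_min f N)).
  exists k. split; [|lra].
  destruct (Nat.lt_ge_cases k N) as [Hl|Hl]; [|exact Hl].
  pose proof (prefix_min_le f N k Hl). unfold f in *. lra.
Qed.

Lemma ceil_jump_position x j :
  rceil (x + INR (S j) * alpha) = (rceil (x + INR j * alpha) + 1)%Z ->
  rfloor ((IZR (rceil (x + INR j * alpha)) - x) / alpha) = Z.of_nat j.
Proof.
  intros E. apply rfloor_uniq. rewrite <- INR_IZR_INZ.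
  destruct (rceil_spec (x + INR j * alpha)) as [_ A].
  destruct (rceil_spec (x + INR (S j) * alpha)) as [B _].
  rewrite E, plus_IZR, S_INR in B.
  split; [apply Rle_div_r | apply Rlt_div_l]; lra.
Qed.

(* The same for 0c_alpha; the strict inequality needs alpha irrational. *)
Lemma floor_jump_position j :
  rfloor (INR (S j) * alpha) = (rfloor (INR j * alpha) + 1)%Z ->
  rfloor ((IZR (rfloor (INR j * alpha)) + 1) / alpha) = Z.of_nat j.
Proof.
  intros E. apply rfloor_uniq. rewrite <- INR_IZR_INZ.
  set (z := rfloor (INR j * alpha)) in *.
  destruct (rfloor_spec (INR j * alpha)) as [_ A]. fold z in A.
  destruct (rfloor_spec (INR (S j) * alpha)) as [B _].
  rewrite E, plus_IZR, S_INR in B.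
  assert (Hne : IZR (Z.of_nat j + 1) * alpha <> IZR (z + 1))
    by (apply irrational_no_relation; [exact alpha_irr|lia]).
  rewrite !plus_IZR, <- INR_IZR_INZ in Hne.
  split; [apply Rle_div_r | apply Rlt_div_l]; [lra|lra|lra|].
  destruct (Rle_lt_or_eq_dec _ _ B) as [Hlt|Heq]; [exact Hlt|].
  symmetry in Heq. contradiction.
Qed.

Lemma suffix_is_series k :
  is_series (Phi_term (suffix (oneC alpha) k)) (profile (offset k)).
Proof.
  set (x := INR k * alpha).
  assert (Hx : forall j, x + INR j * alpha = INR (k + j) * alpha)
    by (intros; unfold x; rewrite plus_INR; ring).
  set (c := fun j => (rceil (x + INR j * alpha) - rceil x)%Z).
  assert (c_0 : c O = 0%Z) by (unfold c; simpl; rewrite Rmult_0_l, Rplus_0_r; lia).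
  assert (c_step : forall j, c (S j) = c j \/ c (S j) = (c j + 1)%Z).
  { intros j. unfold c.
    rewrite S_INR, Rmult_plus_distr_r, Rmult_1_l, <- Rplus_assoc.
    destruct (rceil_add_small (x + INR j * alpha) alpha) as [E|E]; [lra| |];
      rewrite E; lia. }
  apply (is_series_reindex _ c (one_position (offset k))).
  - intros j. unfold suffix, oneC, c. rewrite !Hx, Nat.add_succ_r. lia.
  - exact c_0.
  - exact c_step.
  - intros j E. unfold one_position.
    rewrite INR_IZR_INZ, Z2Nat.id by exact (count_nonneg c c_0 c_step j).
    replace (IZR (c j) + offset k) with (IZR (rceil (x + INR j * alpha)) - x)
      by (unfold c, offset, x; rewrite minus_IZR; ring).
    rewrite ceil_jump_position; [lia|]. unfold c in E. lia.
  - intros M. destruct (rfloor_mult_unbounded alpha M alpha_pos) as [N HN].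
    exists N. pose proof (rceil_add_ge x (INR N * alpha)). unfold c. lia.
  - apply ex_series_profile_term. pose proof (offset_range k). lra.
Qed.

Lemma zeroC_is_series : is_series (Phi_term (zeroC alpha)) (profile 1).
Proof.
  set (c := fun j => rfloor (INR j * alpha)).
  assert (c_0 : c O = 0%Z) by (unfold c; apply rfloor_uniq; simpl; lra).
  assert (c_step : forall j, c (S j) = c j \/ c (S j) = (c j + 1)%Z).
  { intros j. unfold c. rewrite S_INR, Rmult_plus_distr_r, Rmult_1_l.
    apply rfloor_add_small. lra. }
  apply (is_series_reindex _ c (one_position 1)).
  - reflexivity.
  - exact c_0.
  - exact c_step.
  - intros j E. unfold one_position.
    rewrite INR_IZR_INZ, Z2Nat.id by exact (count_nonneg c c_0 c_step j).
    unfold c. rewrite floor_jump_position by exact E. lia.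
  - intros M. exact (rfloor_mult_unbounded alpha M alpha_pos).
  - apply ex_series_profile_term. lra.
Qed.

Lemma PhiR_suffix k : PhiR (suffix (oneC alpha) k) = - profile (offset k).
Proof. unfold PhiR. now rewrite (is_series_unique _ _ (suffix_is_series k)). Qed.

Lemma PhiR_oneC : PhiR (oneC alpha) = - profile 0.
Proof. rewrite <- offset_0. exact (PhiR_suffix 0). Qed.

Lemma PhiR_zeroC : PhiR (zeroC alpha) = - profile 1.
Proof. unfold PhiR. now rewrite (is_series_unique _ _ zeroC_is_series). Qed.

(* Since G is nondecreasing, -G(U_k) <= -G(0), and U_k -> 0 along a
   subsequence with G right-continuous at 0. *)
Lemma limsup_suffix :
  LimSup_seq (fun k => PhiR (suffix (oneC alpha) k)) = Finite (- profile 0).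
Proof.
  apply is_LimSup_seq_unique. intros eps. pose proof (cond_pos eps) as He. split.
  - intros N. destruct (profile_right_continuous_0 eps He) as [del [Hd Hnear]].
    destruct (offset_small_late del N Hd) as [k [Hk Hsmall]].
    exists k. split; [exact Hk|]. rewrite PhiR_suffix.
    pose proof (offset_range k). specialize (Hnear (offset k)). lra.
  - exists 0%nat. intros n _. rewrite PhiR_suffix.
    pose proof (offset_range n). pose proof (profile_mono 0 (offset n)). lra.
Qed.

(* Symmetrically -G(U_k) >= -G(1), approached as U_k -> 1. *)
Lemma liminf_suffix :
  LimInf_seq (fun k => PhiR (suffix (oneC alpha) k)) = Finite (- profile 1).
Proof.
  apply is_LimInf_seq_unique. intros eps. pose proof (cond_pos eps) as He. split.
  - intros N. destruct (profile_left_continuous_1 eps He) as [del [Hd Hnear]].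
    destruct (offset_large_late del N Hd) as [k [Hk Hlarge]].
    exists k. split; [exact Hk|]. rewrite PhiR_suffix.
    pose proof (offset_range k). specialize (Hnear (offset k)). lra.
  - exists 0%nat. intros n _. rewrite PhiR_suffix.
    pose proof (offset_range n). pose proof (profile_mono (offset n) 1). lra.
Qed.

End Mechanical.

Theorem lemma37 (alpha : R) :
  irrational alpha -> ln 2 / ln 3 < alpha -> alpha < 1 ->
  (* the series defining Phi_R converge in the situation considered *)
  ex_series (Phi_term (oneC alpha)) /\ ex_series (Phi_term (zeroC alpha)) /\
  (forall k : nat, ex_series (Phi_term (suffix (oneC alpha) k))) /\
  LimSup_seq (fun k => PhiR (suffix (oneC alpha) k)) = Finite (PhiR (oneC alpha)) /\
  LimInf_seq (fun k => PhiR (suffix (oneC alpha) k)) = Finite (PhiR (zeroC alpha)) /\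
  PhiR (zeroC alpha) = 3 * PhiR (oneC alpha) + 1.
Proof.
  intros Hirr Hlow Hup.
  assert (Hln3 : 0 < ln 3) by (rewrite <- ln_1; apply ln_increasing; lra).
  assert (Hpos : 0 < alpha).
  { apply Rlt_trans with (ln 2 / ln 3); [|exact Hlow].
    apply Rdiv_lt_0_compat; [rewrite <- ln_1; apply ln_increasing|]; lra. }
  assert (Hlarge : ln 2 < alpha * ln 3) by (apply Rlt_div_l in Hlow; lra).
  pose proof (suffix_is_series alpha Hpos Hup Hlarge) as Hsuffix.
  rewrite (PhiR_oneC alpha Hpos Hup Hlarge), (PhiR_zeroC alpha Hpos Hup Hlarge Hirr).
  split; [|split; [|split; [|split; [|split]]]].
  - exact (ex_intro _ _ (Hsuffix 0%nat)).
  - exact (ex_intro _ _ (zeroC_is_series alpha Hpos Hup Hlarge Hirr)).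
  - intros k. exact (ex_intro _ _ (Hsuffix k)).
  - exact (limsup_suffix alpha Hpos Hup Hlarge Hirr).
  - exact (liminf_suffix alpha Hpos Hup Hlarge Hirr).
  - rewrite (profile_shift alpha Hpos Hup Hlarge). ring.
Qed.
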